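(* Let $H$ be a CQG Hopf $*$-algebra. The Yetter–Drinfeld modules $(H,\rhd,\Delta_H)$ and $(\mathcal{I},\bar\rhd,\delta_{\mathcal{I}})$ (described in the context) are isomorphic in ${}_H\mathrm{YD}^H$ if and only if $H$ is of Kac type, i.e. its invariant state $\Phi_H$ is tracial ($\Phi_H(hk)=\Phi_H(kh)$ for all $h,k\in H$).
   Context: A CQG Hopf $*$-algebra is a complex Hopf algebra $(H,\Delta_H,\varepsilon_H,S_H)$ with an anti-linear involution making it a $*$-algebra with $\Delta_H$ a $*$-homomorphism, admitting a state $\Phi_H$ with $(\Phi_H\otimes\mathrm{id})\Delta_H(h)=\Phi_H(h)1=(\mathrm{id}\otimes\Phi_H)\Delta_H(h)$; $S_H$ is invertible. Sweedler notation $\Delta_H(h)=h_{(1)}\otimes h_{(2)}$. ${}_H\mathrm{YD}^H$ is the category of left $H$-modules $V$ with right $H$-comodule structure $v\mapsto v_{(0)}\otimes v_{(1)}$ such that $(hv)_{(0)}\otimes(hv)_{(1)}=h_{(2)}v_{(0)}\otimes h_{(3)}v_{(1)}S_H^{-1}(h_{(1)})$; morphisms are module and comodule maps. $H$ is an object via $h\rhd k=h_{(2)}kS_H^{-1}(h_{(1)})$ and $\Delta_H$. The restricted dual $\mathcal{I}=\{\Phi_H(a\,-):a\in H\}$ of linear functionals on $H$ is an algebra under convolution $(\omega\chi)(h)=(\omega\otimes\chi)\Delta_H(h)$; it carries the unique right $H$-comodule structure $\delta_{\mathcal{I}}(\omega)=\omega_{(0)}\otimes\omega_{(1)}$ with $\chi\omega=\chi(\omega_{(1)})\omega_{(0)}$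 for all $\chi\in\mathcal{I}$, and the left $H$-action $(h\,\bar\rhd\,\omega)(k)=\omega(S_H^{-1}(h_{(2)})kh_{(1)})$; with these, $\mathcal{I}\in{}_H\mathrm{YD}^H$. *)

From HB Require Import structures.
From mathcomp Require Import all_boot all_order all_algebra.
From mathcomp Require Import complex.
From mathcomp Require Import boolp functions reals.
From Stdlib Require List.
Set Implicit Arguments. Unset Strict Implicit. Unset Printing Implicit Defensive.
Import GRing.Theory Num.Theory.
Local Open Scope ring_scope.
Local Open Scope complex_scope.

(* Finite tensors.  An element of V (x) W is represented by a finite   *)
(* list of pairs (the Sweedler-style sum  sum_i v_i (x) w_i).  Two      *)
(* lists denote the same tensor iff every bilinear map agrees on them   *)
(* (universal property of the tensor product).                          *)
Section Tensors.
Variable K : pzRingType.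

Definition tsum (V W : Type) (U : nmodType) (B : V -> W -> U)
    (t : seq (V * W)) : U := \sum_(p <- t) B p.1 p.2.

Definition bilinear_map (V W U : lmodType K) (B : V -> W -> U) : Prop :=
  (forall v, linear (B v)) /\ (forall w, linear (fun v => B v w)).

Definition teq (V W : lmodType K) (t1 t2 : seq (V * W)) : Prop :=
  forall (U : lmodType K) (B : V -> W -> U),
    bilinear_map B -> tsum B t1 = tsum B t2.

Definition tsum3 (V W X : Type) (U : nmodType) (B : V -> W -> X -> U)
    (t : seq (V * W * X)) : U := \sum_(p <- t) B p.1.1 p.1.2 p.2.

Definition trilinear_map (V W X U : lmodType K) (B : V -> W -> X -> U) : Prop :=
  (forall v w, linear (B v w)) /\ (forall v x, linear (fun w => B v w x))
  /\ (forall w x, linear (fun v => B v w x)).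

Definition teq3 (V W X : lmodType K) (t1 t2 : seq (V * W * X)) : Prop :=
  forall (U : lmodType K) (B : V -> W -> X -> U),
    trilinear_map B -> tsum3 B t1 = tsum3 B t2.

Definition tscale (V : lmodType K) (W : Type) (a : K) (t : seq (V * W)) :=
  [seq (a *: p.1, p.2) | p <- t].

End Tensors.

(*   Delta h : Sweedler representation of Delta_H(h) in H (x) H       *)
Section CQG.
Variable R : realType.
Local Notation C := R[i].
Variable H : algType C.

Record is_CQG_Hopf_star (Delta : H -> seq (H * H)) (eps : H -> C)
  (S Sinv : H -> H) (star : H -> H) (Phi : H -> C) : Prop := {
  Delta_lin : forall (a : C) h k,
    teq (Delta (a *: h + k)) (tscale a (Delta h) ++ Delta k);
  Delta_mul : forall h k,
    teq (Delta (h * k)) [seq (p.1 * q.1, p.2 * q.2) | p <- Delta h, q <- Delta k];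
  Delta_one : teq (Delta 1) [:: (1, 1)];
  Delta_coassoc : forall h,
    teq3 [seq (q.1, q.2, p.2) | p <- Delta h, q <- Delta p.1]
         [seq (p.1, q.1, q.2) | p <- Delta h, q <- Delta p.2];
  eps_lin : forall (a : C) h k, eps (a *: h + k) = a * eps h + eps k;
  eps_mul : forall h k, eps (h * k) = eps h * eps k;
  eps_one : eps 1 = 1;
  counit_l : forall h, \sum_(p <- Delta h) eps p.1 *: p.2 = h;
  counit_r : forall h, \sum_(p <- Delta h) eps p.2 *: p.1 = h;
  S_lin : forall (a : C) h k, S (a *: h + k) = a *: S h + S k;
  antipode_l : forall h, \sum_(p <- Delta h) S p.1 * p.2 = eps h *: 1;
  antipode_r : forall h, \sum_(p <- Delta h) p.1 * S p.2 = eps h *: 1;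
  SK : cancel S Sinv;
  SinvK : cancel Sinv S;
  star_antilin : forall (a : C) h k, star (a *: h + k) = a^* *: star h + star k;
  star_mul : forall h k, star (h * k) = star k * star h;
  star_invol : involutive star;
  Delta_star : forall h,
    teq (Delta (star h)) [seq (star p.1, star p.2) | p <- Delta h];
  Phi_lin : forall (a : C) h k, Phi (a *: h + k) = a * Phi h + Phi k;
  Phi_one : Phi 1 = 1;
  Phi_pos : forall h, 0 <= Phi (star h * h);
  Phi_inv_l : forall h, \sum_(p <- Delta h) Phi p.1 *: p.2 = Phi h *: 1;
  Phi_inv_r : forall h, \sum_(p <- Delta h) Phi p.2 *: p.1 = Phi h *: 1
}.

Definition tracial (Phi : H -> C) : Prop :=
  forall h k, Phi (h * k) = Phi (k * h).

(* the space of (all) functions H -> C, a C-vector space;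
   the restricted dual I is the subset of the Phi(a -) *)
Definition Hfun := H -> C^o.

Definition inI (Phi : H -> C) (w : Hfun) : Prop :=
  exists a : H, w = (fun x => Phi (a * x)).

Definition conv (Delta : H -> seq (H * H)) (w chi : Hfun) : Hfun :=
  fun h => \sum_(p <- Delta h) w p.1 * chi p.2.

(* deltaI is the right H-comodule structure of I:
   deltaI(w) in I (x) H and chi w = chi(w_(1)) w_(0) for all chi in I *)
Definition is_deltaI (Delta : H -> seq (H * H)) (Phi : H -> C)
    (deltaI : Hfun -> seq (Hfun * H)) : Prop :=
  forall w, inI Phi w ->
    (forall p, List.In p (deltaI w) -> inI Phi p.1) /\
    (forall chi, inI Phi chi ->
       conv Delta chi w = \sum_(p <- deltaI w) chi p.2 *: p.1).

Definition actH (Delta : H -> seq (H * H)) (Sinv : H -> H) (h k : H) : H :=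
  \sum_(p <- Delta h) p.2 * k * Sinv p.1.

Definition actI (Delta : H -> seq (H * H)) (Sinv : H -> H) (h : H) (w : Hfun)
  : Hfun := fun k => \sum_(p <- Delta h) w (Sinv p.2 * k * p.1).

Definition YD_mor_HI (Delta : H -> seq (H * H)) (Sinv : H -> H) (Phi : H -> C)
    (deltaI : Hfun -> seq (Hfun * H)) (F : H -> Hfun) : Prop :=
  [/\ forall h, inI Phi (F h),
      forall (a : C) h k, F (a *: h + k) = a *: F h + F k,
      forall h k, F (actH Delta Sinv h k) = actI Delta Sinv h (F k)
    & forall h, teq (deltaI (F h)) [seq (F p.1, p.2) | p <- Delta h]].

Definition YD_mor_IH (Delta : H -> seq (H * H)) (Sinv : H -> H) (Phi : H -> C)
    (deltaI : Hfun -> seq (Hfun * H)) (G : Hfun -> H) : Prop :=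
  [/\ forall (a : C) w1 w2, inI Phi w1 -> inI Phi w2 ->
        G (a *: w1 + w2) = a *: G w1 + G w2,
      forall h w, inI Phi w -> G (actI Delta Sinv h w) = actH Delta Sinv h (G w)
    & forall w, inI Phi w -> teq (Delta (G w)) [seq (G p.1, p.2) | p <- deltaI w]].

Definition YD_isomorphic (Delta : H -> seq (H * H)) (Sinv : H -> H)
    (Phi : H -> C) (deltaI : Hfun -> seq (Hfun * H)) : Prop :=
  exists (F : H -> Hfun) (G : Hfun -> H),
    [/\ YD_mor_HI Delta Sinv Phi deltaI F, YD_mor_IH Delta Sinv Phi deltaI G,
        forall h, G (F h) = h
      & forall w, inI Phi w -> F (G w) = w].

End CQG.

From HB Require Import structures.
From mathcomp Require Import all_boot all_order all_algebra.
From mathcomp Require Import complex.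
From mathcomp Require Import boolp functions reals.
From mathcomp Require Import ring lra.
Set Implicit Arguments. Unset Strict Implicit. Unset Printing Implicit Defensive.
Import GRing.Theory Num.Theory.
Local Open Scope ring_scope.
Local Open Scope complex_scope.

(* If F : H -> I is an isomorphism of Yetter-Drinfeld modules, then
   omega := F 1 is coinvariant because 1 is, which forces omega = omega(1) Phi
   with omega(1) <> 0; as h |> 1 = eps(h) 1, the module property of F makes Phi
   invariant under the adjoint action: Phi(S^-1(h_2) x h_1) = eps(h) Phi(x).
   This gives the modular identity Phi(a b) = Phi(b S^2(a)).  Phi is faithful
   (a consequence of strong invariance), so S^4 = id; for z = S^2(y) - y the
   modular identity gives Phi(z z^* ) = - Phi(z^* z), hence by positivity and
   Cauchy-Schwarz z = 0, i.e. S^2 = id and Phi is tracial.  Conversely, if Phi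
   is tracial then S = S^-1 and k |-> Phi(S(k) -) is an isomorphism. *)

Section LinearPredicate.
Variables (K : pzRingType) (U V : lmodType K) (f : U -> V).
Hypothesis lf : linear f.
Let fL : {linear U -> V} := HB.pack f (GRing.isLinear.Build _ _ _ _ f lf).

Lemma lin0 : f 0 = 0. Proof. exact: (linear0 fL). Qed.
Lemma linD x y : f (x + y) = f x + f y. Proof. exact: (linearD fL). Qed.
Lemma linN x : f (- x) = - f x. Proof. exact: (linearN fL). Qed.
Lemma linB x y : f (x - y) = f x - f y. Proof. exact: (linearB fL). Qed.
Lemma linZ a x : f (a *: x) = a *: f x. Proof. exact: (linearZZ fL). Qed.
Lemma lin_sum I (r : seq I) (F : I -> U) :
  f (\sum_(i <- r) F i) = \sum_(i <- r) f (F i).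
Proof. exact: (linear_sum fL). Qed.

End LinearPredicate.

Section LinearCombinators.
Variable K : comPzRingType.
Variable A : algType K.
Implicit Types U V W : lmodType K.

Lemma linear_id U : linear (fun x : U => x).
Proof. by []. Qed.

Lemma linear_comp U V W (f : V -> W) (g : U -> V) :
  linear f -> linear g -> linear (fun x => f (g x)).
Proof. by move=> lf lg a x y; rewrite lg lf. Qed.

Lemma linear_add U V (f g : U -> V) :
  linear f -> linear g -> linear (fun x => f x + g x).
Proof. by move=> lf lg a x y; rewrite lf lg scalerDr addrACA. Qed.

Lemma linear_opp U V (f : U -> V) : linear f -> linear (fun x => - f x).
Proof. by move=> lf a x y; rewrite lf opprD scalerN. Qed.

Lemma linear_sumf U V I (r : seq I) (F : I -> U -> V) :
  (forall i, linear (F i)) -> linear (fun x => \sum_(i <- r) F i x).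
Proof.
move=> lF a x y; rewrite scaler_sumr -big_split /=.
by apply: eq_bigr => i _; rewrite lF.
Qed.

Lemma linear_scale U V (k : K) (f : U -> V) :
  linear f -> linear (fun x => k *: f x).
Proof. by move=> lf a x y; rewrite lf scalerDr !scalerA mulrC. Qed.

Lemma linear_scalev U V (f : U -> K^o) (v : V) :
  linear f -> linear (fun x => f x *: v).
Proof. by move=> lf a x y; rewrite lf scalerDl scalerA. Qed.

Lemma linear_mull U (c : A) (f : U -> A) : linear f -> linear (fun x => c * f x).
Proof. by move=> lf a x y; rewrite lf mulrDr scalerAr. Qed.

Lemma linear_mulr U (c : A) (f : U -> A) : linear f -> linear (fun x => f x * c).
Proof. by move=> lf a x y; rewrite lf mulrDl scalerAl. Qed.

End LinearCombinators.

(* A tensor sum_i u_i (x) w_i all of whose contractions sum_i t(w_i) u_i by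
   the functionals t in T vanish is killed by every bilinear B that only sees
   W through T.  By induction on the number of terms: if u_1 is a combination
   of the other u_i it can be absorbed into them, and otherwise the vanishing
   contractions force t(w_1) = 0 for all t in T, so that B u_1 w_1 = 0. *)
Section Separation.
Variable K : fieldType.
Variables (V W U : lmodType K).
Variables (P : V -> Prop) (T : (W -> K^o) -> Prop) (B : V -> W -> U).
Hypothesis P0 : P 0.
Hypothesis P_lin : forall a u u', P u -> P u' -> P (a *: u + u').
Hypothesis T_lin : forall t, T t -> linear t.
Hypothesis B_linl : forall w a u u', P u -> P u' ->
  B (a *: u + u') w = a *: B u w + B u' w.
Hypothesis B_linr : forall u, linear (B u).
Hypothesis B_sep : forall u w, P u -> (forall t, T t -> t w = 0) -> B u w = 0.

Let B0 w : B 0 w = 0.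
Proof.
have := B_linl w 1 P0 P0; rewrite !scale1r addr0 => e.
by apply: (addrI (B 0 w)); rewrite addr0 -e.
Qed.

Let P_comb (L : seq (V * W)) (beta : V * W -> K) :
  (forall p, List.In p L -> P p.1) -> P (\sum_(p <- L) beta p *: p.1).
Proof.
elim: L => [|p L IH] HL; first by rewrite big_nil.
rewrite big_cons; apply: P_lin; first by apply: HL; left.
by apply: IH => q Hq; apply: HL; right.
Qed.

Let B_comb (L : seq (V * W)) (beta : V * W -> K) w :
  (forall p, List.In p L -> P p.1) ->
  B (\sum_(p <- L) beta p *: p.1) w = \sum_(p <- L) beta p *: B p.1 w.
Proof.
elim: L => [|p L IH] HL; first by rewrite !big_nil B0.
have HL' q : List.In q L -> P q.1 by move=> Hq; apply: HL; right.
rewrite !big_cons B_linl ?IH //; first by apply: HL; left.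
exact: P_comb.
Qed.

Let contractions_vanish (L : seq (V * W)) :=
  forall t, T t -> \sum_(p <- L) t p.2 *: p.1 = 0.

Let separated_sum_eq0_size n (L : seq (V * W)) : (size L <= n)%N ->
  (forall p, List.In p L -> P p.1) -> contractions_vanish L ->
  \sum_(p <- L) B p.1 p.2 = 0.
Proof.
elim: n L => [|n IH] [|[u w] L] //=; rewrite ?big_nil // ltnS => sL HL hc.
have Pu : P u by apply: (HL (u, w)); left.
have HL' q : List.In q L -> P q.1 by move=> Hq; apply: HL; right.
rewrite big_cons /=.
have [[beta eu]|not_comb] :=
  pselect (exists beta : V * W -> K, u = \sum_(p <- L) beta p *: p.1).
  pose L2 := [seq (p.1, p.2 + beta p *: w) | p <- L].
  have HL2 q : List.In q L2 -> P q.1.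
    by move=> /List.in_map_iff [p [<- Hp]] /=; exact: HL'.
  have hc2 : contractions_vanish L2.
    move=> t Tt; rewrite /L2 big_map /=.
    have := hc t Tt; rewrite big_cons /= eu scaler_sumr -big_split /= => e.
    rewrite -[RHS]e; apply: eq_bigr => p _.
    by rewrite (linD (T_lin Tt)) (linZ (T_lin Tt)) scalerDl scalerA mulrC addrC.
  apply: etrans (IH L2 _ HL2 hc2); last by rewrite size_map.
  rewrite /L2 big_map /= eu B_comb // -big_split /=.
  by apply: eq_bigr => p _; rewrite (linD (B_linr _)) (linZ (B_linr _)) addrC.
have tw t : T t -> t w = 0.
  move=> Tt; apply/eqP/negPn/negP => nz; apply: not_comb.
  exists (fun p => - (t w)^-1 * t p.2).
  have := hc t Tt; rewrite big_cons /= => /eqP; rewrite addr_eq0 => /eqP e.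
  rewrite -[u](scalerK nz) e scalerN scaler_sumr -sumrN.
  by apply: eq_bigr => p _; rewrite scalerA mulNr scaleNr.
rewrite (B_sep Pu tw) add0r (IH L) // => t Tt.
by have := hc t Tt; rewrite big_cons /= tw // scale0r add0r.
Qed.

Lemma separated_sum_eq0 (L : seq (V * W)) :
  (forall p, List.In p L -> P p.1) ->
  (forall t, T t -> \sum_(p <- L) t p.2 *: p.1 = 0) ->
  \sum_(p <- L) B p.1 p.2 = 0.
Proof. exact: (@separated_sum_eq0_size (size L)). Qed.

End Separation.

Lemma quadratic_ge0_coef1_eq0 (R : realFieldType) (e d : R) :
  (forall r : R, 0 <= r * e + r ^+ 2 * d) -> e = 0.
Proof.
move=> h; have h1 := h 1; have h2 := h (-1).
have d0 : 0 <= d by nra.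
pose r := - e / (1 + d).
have hr : r * (1 + d) = - e by rewrite /r mulrVK // unitfE; lra.
have he : e = - (r * (1 + d)) by rewrite hr opprK.
have := h r; rewrite he => hrr.
have -> : r = 0 by nra.
by rewrite mul0r oppr0.
Qed.

Lemma quadratic_ge0_coef1_eq0C (R : rcfType) (E D : R[i]) :
  (forall r : R, 0 <= r%:C * E + (r%:C) ^+ 2 * D) -> E = 0.
Proof.
case: E => e1 e2; case: D => d1 d2 h.
have hc (r : R) : r * e2 + r ^+ 2 * d2 = 0 /\ 0 <= r * e1 + r ^+ 2 * d1.
  have := h r; rewrite lecE /= => /andP [/eqP h1 h2].
  split; last by move: h2; rewrite !mul0r !subr0 !expr2 /=; simpc.
  by move: h1; simpc.
have e2z : e2 = 0.
  have [a1 _] := hc 1; have [a2 _] := hc (-1).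
  by move: a1 a2; rewrite !expr2; lra.
have e1z : e1 = 0 by apply: (quadratic_ge0_coef1_eq0 (d := d1)) => r; case: (hc r).
by rewrite e1z e2z.
Qed.

Section CQGTheory.
Variable R : realType.
Local Notation C := R[i].
Variable H : algType C.
Variables (Delta : H -> seq (H * H)) (eps : H -> C) (S Sinv star : H -> H).
Variable Phi : H -> C.
Hypothesis hH : is_CQG_Hopf_star Delta eps S Sinv star Phi.
Implicit Types U V : lmodType C.

Definition sweedler U (h : H) (g : H -> H -> U) : U :=
  \sum_(p <- Delta h) g p.1 p.2.
Local Notation sw := sweedler.

Lemma linear_S : linear S.
Proof. by move=> a x y; rewrite (S_lin hH). Qed.

Lemma linear_Sinv : linear Sinv.
Proof.
by move=> a x y; apply: (can_inj (SK hH)); rewrite (SinvK hH) (S_lin hH) !(SinvK hH).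
Qed.

Lemma linear_Phi : linear (Phi : H -> C^o).
Proof. by move=> a x y; rewrite (Phi_lin hH). Qed.

Lemma linear_eps : linear (eps : H -> C^o).
Proof. by move=> a x y; rewrite (eps_lin hH). Qed.

Lemma PhiD x y : Phi (x + y) = Phi x + Phi y. Proof. exact: (linD linear_Phi). Qed.
Lemma PhiB x y : Phi (x - y) = Phi x - Phi y. Proof. exact: (linB linear_Phi). Qed.
Lemma PhiZ k x : Phi (k *: x) = k * Phi x. Proof. exact: (linZ linear_Phi). Qed.
Lemma epsZ k x : eps (k *: x) = k * eps x. Proof. exact: (linZ linear_eps). Qed.

Lemma sw_ext U h (g g' : H -> H -> U) :
  (forall a b, g a b = g' a b) -> sw h g = sw h g'.
Proof. by move=> e; apply: eq_bigr => p _; rewrite e. Qed.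

Lemma sw_map U V (f : U -> V) : linear f ->
  forall h g, f (sw h g) = sw h (fun a b => f (g a b)).
Proof. by move=> lf h g; rewrite /sweedler (lin_sum lf). Qed.

Lemma sw_scale U h (g : H -> H -> U) k :
  k *: sw h g = sw h (fun a b => k *: g a b).
Proof. by rewrite /sweedler scaler_sumr. Qed.

Lemma sw_exch U h k (g : H -> H -> H -> H -> U) :
  sw h (fun a b => sw k (fun c d => g a b c d)) =
  sw k (fun c d => sw h (fun a b => g a b c d)).
Proof. by rewrite /sweedler exchange_big. Qed.

Lemma linear_sw U (g : H -> H -> U) : bilinear_map g -> linear (fun h => sw h g).
Proof.
move=> bg a h k; rewrite /sweedler.
have := Delta_lin hH a h k bg; rewrite /tsum big_cat big_map /= => ->.
congr (_ + _); rewrite scaler_sumr; apply: eq_bigr => p _.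
by rewrite (linZ (bg.2 p.2)).
Qed.

Lemma linear_sw_comp U V (g : H -> H -> U) (f : V -> H) :
  bilinear_map g -> linear f -> linear (fun x => sw (f x) g).
Proof. by move=> bg; apply: (linear_comp (f := fun h => sw h g)); apply: linear_sw. Qed.

Lemma linear_sw_integrand U V h (G : H -> H -> V -> U) :
  (forall a b, linear (G a b)) -> linear (fun x => sw h (fun a b => G a b x)).
Proof. by move=> lG; apply: linear_sumf => p; apply: lG. Qed.

Ltac linsolve := repeat first [
    apply: linear_id
  | match goal with
    | |- bilinear_map _ => split => ? /=
    | |- trilinear_map _ => split; [|split] => ? ? /=
    end
  | apply: linear_add | apply: linear_opp
  | apply: linear_sw_integrand => ? ? /=
  | apply: linear_sw_comp
  | apply: linear_sumf => ? /=
  | apply: linear_scale | apply: linear_scalev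
  | apply: linear_mull | apply: linear_mulr
  | apply: (linear_comp linear_S) | apply: (linear_comp linear_Sinv)
  | apply: (linear_comp linear_Phi) | apply: (linear_comp linear_eps)
  | (apply: linear_comp; first eassumption) ].

Ltac swext := repeat (apply: sw_ext => ? ? /=).

Lemma sw_mul U (g : H -> H -> U) h k : bilinear_map g ->
  sw (h * k) g = sw h (fun a b => sw k (fun c d => g (a * c) (b * d))).
Proof.
move=> bg; rewrite /sweedler; have := Delta_mul hH h k bg.
by rewrite /tsum big_allpairs_dep /= => ->.
Qed.

Lemma sw_one U (g : H -> H -> U) : bilinear_map g -> sw 1 g = g 1 1.
Proof.
move=> bg; rewrite /sweedler; have := Delta_one hH bg.
by rewrite /tsum big_cons big_nil addr0 /= => ->.
Qed.

Lemma sw_coassoc U (g : H -> H -> H -> U) h : trilinear_map g ->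
  sw h (fun a b => sw a (fun c d => g c d b)) =
  sw h (fun a b => sw b (fun c d => g a c d)).
Proof.
move=> tg; rewrite /sweedler; have := Delta_coassoc hH h tg.
by rewrite /tsum3 !big_allpairs_dep /=.
Qed.

Lemma sw_counitL U (f : H -> U) h : linear f -> sw h (fun a b => eps a *: f b) = f h.
Proof.
move=> lf; rewrite -{2}(counit_l hH h) (lin_sum lf).
by apply: eq_bigr => p _; rewrite (linZ lf).
Qed.

Lemma sw_counitR U (f : H -> U) h : linear f -> sw h (fun a b => eps b *: f a) = f h.
Proof.
move=> lf; rewrite -{2}(counit_r hH h) (lin_sum lf).
by apply: eq_bigr => p _; rewrite (linZ lf).
Qed.

Lemma sw_antipodeL U (f : H -> U) h : linear f ->
  sw h (fun a b => f (S a * b)) = eps h *: f 1.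
Proof. by move=> lf; rewrite -(linZ lf) -(antipode_l hH h) (lin_sum lf). Qed.

Lemma sw_antipodeR U (f : H -> U) h : linear f ->
  sw h (fun a b => f (a * S b)) = eps h *: f 1.
Proof. by move=> lf; rewrite -(linZ lf) -(antipode_r hH h) (lin_sum lf). Qed.

Lemma sw_PhiinvL U (f : H -> U) h : linear f ->
  sw h (fun a b => Phi a *: f b) = Phi h *: f 1.
Proof.
move=> lf; rewrite -(linZ lf) -(Phi_inv_l hH h) (lin_sum lf).
by apply: eq_bigr => p _; rewrite (linZ lf).
Qed.

Lemma sw_PhiinvR U (f : H -> U) h : linear f ->
  sw h (fun a b => Phi b *: f a) = Phi h *: f 1.
Proof.
move=> lf; rewrite -(linZ lf) -(Phi_inv_r hH h) (lin_sum lf).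
by apply: eq_bigr => p _; rewrite (linZ lf).
Qed.

Lemma S_mul a b : S (a * b) = S b * S a.
Proof.
pose G a1 a2 a3 :=
  sw b (fun b1 b' => sw b' (fun b2 b3 => S b1 * S a1 * ((a2 * b2) * S (a3 * b3)))).
have antipode_mul x y (f : H -> H) : linear f ->
    sw x (fun a2 a3 => sw y (fun b2 b3 => f ((a2 * b2) * S (a3 * b3)))) =
    (eps x * eps y) *: f 1.
  move=> lf; rewrite -(sw_mul (g := fun p q => f (p * S q))); last by linsolve.
  by rewrite sw_antipodeR // (eps_mul hH).
transitivity (sw a (fun a1 a' => sw a' (fun a2 a3 => G a1 a2 a3))); last first.
  rewrite /G; under sw_ext => a1 a' do rewrite sw_exch.
  transitivity (sw a (fun a1 a' => sw b (fun b1 b' => (eps a' * eps b') *: (S b1 * S a1)))).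
    by swext; rewrite (antipode_mul _ _ (fun z => S _ * S _ * z)) ?mulr1 //; linsolve.
  transitivity (sw a (fun a1 a' => eps a' *: (S b * S a1))).
    swext; rewrite -(sw_counitR (f := fun b1 => S b1 * S _)); last by linsolve.
    by rewrite sw_scale; swext; rewrite scalerA mulrC.
  by rewrite (sw_counitR (f := fun a1 => S b * S a1)) //; linsolve.
symmetry; rewrite -(sw_coassoc (g := G)); last by rewrite /G; linsolve.
transitivity (sw a (fun a'' a3 => eps a'' *:
    sw b (fun b1 b' => sw b' (fun b2 b3 => S b1 * b2 * S (a3 * b3))))).
  apply: sw_ext => a'' a3.
  pose F y := sw b (fun b1 b' => sw b' (fun b2 b3 => S b1 * (y * b2) * S (a3 * b3))).
  transitivity (sw a'' (fun a1 a2 => F (S a1 * a2))).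
    by rewrite /G /F; swext; rewrite !mulrA.
  rewrite sw_antipodeL; last by rewrite /F; linsolve.
  by congr (_ *: _); rewrite /F; swext; rewrite mul1r.
rewrite (sw_counitL (f := fun a3 =>
  sw b (fun b1 b' => sw b' (fun b2 b3 => S b1 * b2 * S (a3 * b3))))); last by linsolve.
rewrite -(sw_coassoc (g := fun b1 b2 b3 => S b1 * b2 * S (a * b3))); last by linsolve.
transitivity (sw b (fun b'' b3 => eps b'' *: S (a * b3))).
  by swext; rewrite (sw_antipodeL (f := fun y => y * S (_ * _))) ?mul1r //; linsolve.
by rewrite (sw_counitL (f := fun b3 => S (a * b3))) //; linsolve.
Qed.

Lemma S1 : S 1 = 1.
Proof.
have := antipode_l hH 1; rewrite (eps_one hH) scale1r.
have -> : \sum_(p <- Delta 1) S p.1 * p.2 = sw 1 (fun a b => S a * b) by [].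
by rewrite sw_one ?mulr1 //; linsolve.
Qed.

Lemma Sinv_mul a b : Sinv (a * b) = Sinv b * Sinv a.
Proof. by apply: (can_inj (SK hH)); rewrite (SinvK hH) S_mul !(SinvK hH). Qed.

Lemma Sinv1 : Sinv 1 = 1.
Proof. by rewrite -{1}S1 (SK hH). Qed.

Lemma sw_antipodeInvL U (f : H -> U) h : linear f ->
  sw h (fun a b => f (b * Sinv a)) = eps h *: f 1.
Proof.
move=> lf; suff e : sw h (fun a b => b * Sinv a) = eps h *: 1.
  by rewrite -(sw_map lf) e (linZ lf).
apply: (can_inj (SK hH)); rewrite (sw_map linear_S) (linZ linear_S) S1.
by rewrite -(sw_antipodeR (f := id)) //; swext; rewrite S_mul (SinvK hH).
Qed.

Lemma sw_antipodeInvR U (f : H -> U) h : linear f ->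
  sw h (fun a b => f (Sinv b * a)) = eps h *: f 1.
Proof.
move=> lf; suff e : sw h (fun a b => Sinv b * a) = eps h *: 1.
  by rewrite -(sw_map lf) e (linZ lf).
apply: (can_inj (SK hH)); rewrite (sw_map linear_S) (linZ linear_S) S1.
by rewrite -(sw_antipodeL (f := id)) //; swext; rewrite S_mul (SinvK hH).
Qed.

Lemma strong_invariance_S b c :
  sw c (fun c1 c2 => Phi (b * c2) *: c1) = sw b (fun b1 b2 => Phi (b2 * c) *: S b1).
Proof.
symmetry.
transitivity (sw b (fun b1 b2 => sw (b2 * c) (fun p q => Phi q *: (S b1 * p)))).
  by swext; rewrite (sw_PhiinvR (f := fun x => S _ * x)) ?mulr1 //; linsolve.
transitivity (sw b (fun b1 b2 =>
    sw b2 (fun x y => sw c (fun c1 c2 => Phi (y * c2) *: (S b1 * (x * c1)))))).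
  by swext; rewrite (sw_mul (g := fun p q => Phi q *: (S _ * p))) //; linsolve.
rewrite -(sw_coassoc (g := fun b1 x y =>
  sw c (fun c1 c2 => Phi (y * c2) *: (S b1 * (x * c1))))); last by linsolve.
transitivity (sw b (fun b' y => eps b' *: sw c (fun c1 c2 => Phi (y * c2) *: c1))).
  apply: sw_ext => b' y /=.
  pose F z := sw c (fun c1 c2 => Phi (y * c2) *: (z * c1)).
  transitivity (sw b' (fun b1 x => F (S b1 * x))); first by swext; rewrite mulrA.
  by rewrite sw_antipodeL /F; [congr (_ *: _); swext; rewrite mul1r | linsolve].
by rewrite (sw_counitL (f := fun y => sw c (fun c1 c2 => Phi (y * c2) *: c1))) //; linsolve.
Qed.

Lemma strong_invariance_Sinv_r a b :
  sw a (fun a1 a2 => Phi (a2 * b) *: a1) = sw b (fun b1 b2 => Phi (a * b2) *: Sinv b1).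
Proof.
symmetry.
transitivity (sw b (fun b1 b2 => sw (a * b2) (fun p q => Phi q *: (p * Sinv b1)))).
  by swext; rewrite (sw_PhiinvR (f := fun x => x * Sinv _)) ?mul1r //; linsolve.
transitivity (sw b (fun b1 b2 =>
    sw b2 (fun x y => sw a (fun a1 a2 => Phi (a2 * y) *: (a1 * x * Sinv b1))))).
  swext; rewrite (sw_mul (g := fun p q => Phi q *: (p * Sinv _))); last by linsolve.
  by rewrite sw_exch.
rewrite -(sw_coassoc (g := fun b1 x y =>
  sw a (fun a1 a2 => Phi (a2 * y) *: (a1 * x * Sinv b1)))); last by linsolve.
transitivity (sw b (fun b' y => eps b' *: sw a (fun a1 a2 => Phi (a2 * y) *: a1))).
  apply: sw_ext => b' y /=.
  pose F z := sw a (fun a1 a2 => Phi (a2 * y) *: (a1 * z)).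
  transitivity (sw b' (fun b1 x => F (x * Sinv b1))); first by swext; rewrite mulrA.
  by rewrite sw_antipodeInvL /F; [congr (_ *: _); swext; rewrite mulr1 | linsolve].
by rewrite (sw_counitL (f := fun y => sw a (fun a1 a2 => Phi (a2 * y) *: a1))) //; linsolve.
Qed.

Lemma strong_invariance_Sinv_l a b :
  sw a (fun a1 a2 => Phi (b * a1) *: a2) = sw b (fun b1 b2 => Phi (b1 * a) *: Sinv b2).
Proof.
symmetry.
transitivity (sw b (fun b1 b2 => sw (b1 * a) (fun p q => Phi p *: (Sinv b2 * q)))).
  by swext; rewrite (sw_PhiinvL (f := fun q => Sinv _ * q)) ?mulr1 //; linsolve.
transitivity (sw b (fun b1 b2 =>
    sw b1 (fun x y => sw a (fun a1 a2 => Phi (x * a1) *: (Sinv b2 * (y * a2)))))).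
  by swext; rewrite (sw_mul (g := fun p q => Phi p *: (Sinv _ * q))) //; linsolve.
rewrite (sw_coassoc (g := fun x y b2 =>
  sw a (fun a1 a2 => Phi (x * a1) *: (Sinv b2 * (y * a2))))); last by linsolve.
transitivity (sw b (fun x w => eps w *: sw a (fun a1 a2 => Phi (x * a1) *: a2))).
  apply: sw_ext => x w /=.
  pose F z := sw a (fun a1 a2 => Phi (x * a1) *: (z * a2)).
  transitivity (sw w (fun y b2 => F (Sinv b2 * y))); first by swext; rewrite mulrA.
  by rewrite sw_antipodeInvR /F; [congr (_ *: _); swext; rewrite mul1r | linsolve].
by rewrite (sw_counitR (f := fun x => sw a (fun a1 a2 => Phi (x * a1) *: a2))) //; linsolve.
Qed.

Lemma inI_linear (t : Hfun H) : inI Phi t -> linear t.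
Proof. by move=> [b ->]; linsolve. Qed.

Lemma inI_Phi_mul b : inI Phi (fun x => Phi (b * x)).
Proof. by exists b. Qed.

Lemma right_null_contractions c : (forall x, Phi (x * c) = 0) ->
  forall t, inI Phi t -> \sum_(p <- Delta c) t p.2 *: p.1 = 0.
Proof.
move=> hc t [b ->]; have := strong_invariance_S b c; rewrite /sweedler => ->.
by rewrite big1 // => p _; rewrite hc scale0r.
Qed.

Lemma eps_right_null c : (forall x, Phi (x * c) = 0) -> eps c = 0.
Proof.
move=> hc.
have e : \sum_(p <- Delta c) (Phi (S p.1 * p.2) : C^o) = 0.
  apply: (separated_sum_eq0 (P := fun _ => True) (T := inI Phi)
    (B := fun u w => (Phi (S u * w) : C^o))) => //.
  - exact: inI_linear.
  - move=> w a u u' _ _.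
    have lB : linear (fun u => (Phi (S u * w) : C^o)) by linsolve.
    exact: lB.
  - by move=> u /=; linsolve.
  - by move=> u w _ hw; exact: (hw _ (inI_Phi_mul (S u))).
  - exact: right_null_contractions.
rewrite -[eps c]mulr1 -(Phi_one hH) -PhiZ -(antipode_l hH c).
by rewrite (lin_sum linear_Phi).
Qed.

Lemma Phi_faithful c : (forall x, Phi (x * c) = 0) -> c = 0.
Proof.
move=> hc; rewrite -(counit_r hH c).
apply: (separated_sum_eq0 (P := fun _ => True) (T := inI Phi)
  (B := fun u w => eps w *: u)) => //.
- exact: inI_linear.
- by move=> w a u u' _ _; rewrite scalerDr !scalerA mulrC.
- by move=> u /=; linsolve.
- move=> u w _ hw; rewrite eps_right_null ?scale0r // => x.
  exact: (hw _ (inI_Phi_mul x)).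
- exact: right_null_contractions.
Qed.

Lemma Phi_Sinv x : Phi (Sinv x) = Phi x.
Proof.
pose T := sw x (fun b1 b2 => Phi (Sinv b1) *: b2).
have eT : T = Phi x *: 1.
  apply/eqP; rewrite -subr_eq0; apply/eqP; apply: Phi_faithful => a.
  suff e1 : Phi (a * T) = Phi a * Phi x.
    by rewrite mulrBr PhiB e1 mulr_algr PhiZ mulrC subrr.
  transitivity (Phi (sw x (fun b1 b2 => Phi (a * b2) *: Sinv b1))).
    have la : linear (fun y : H => a * y) by linsolve.
    rewrite /T (sw_map la) !(sw_map linear_Phi).
    by swext; rewrite -scalerAr !PhiZ mulrC.
  rewrite -strong_invariance_Sinv_r.
  transitivity (Phi (sw a (fun a1 a2 => Phi a1 *: (a2 * x)))).
    by rewrite !(sw_map linear_Phi); swext; rewrite !PhiZ mulrC.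
  by rewrite (sw_PhiinvL (f := fun y => y * x)) ?mul1r ?PhiZ //; linsolve.
have := congr1 eps eT; rewrite epsZ (eps_one hH) mulr1 => <-.
rewrite /T (sw_map linear_eps).
transitivity (Phi (Sinv (sw x (fun b1 b2 => eps b2 *: b1)))).
  by rewrite /sweedler (counit_r hH).
rewrite (sw_map linear_Sinv) (sw_map linear_Phi); swext.
by rewrite (linZ linear_Sinv) PhiZ epsZ mulrC.
Qed.

Lemma Phi_S x : Phi (S x) = Phi x.
Proof. by rewrite -Phi_Sinv (SK hH). Qed.

Lemma starD x y : star (x + y) = star x + star y.
Proof.
have -> : star x = Num.conj 1 *: star x by rewrite [Num.conj 1]conjc1 scale1r.
by rewrite -(star_antilin hH) scale1r.
Qed.

Lemma star0 : star 0 = 0.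
Proof. by apply: (addrI (star 0)); rewrite -starD !addr0. Qed.

Lemma starZ t x : star (t *: x) = Num.conj t *: star x.
Proof. by rewrite -[t *: x]addr0 (star_antilin hH) star0 addr0. Qed.

Lemma Phi_star_expand (z w : H) (t : C) :
  Phi (star (t *: w + z) * (t *: w + z)) =
  Num.conj t * t * Phi (star w * w) + Num.conj t * Phi (star w * z) + t * Phi (star z * w)
  + Phi (star z * z).
Proof.
rewrite starD starZ mulrDl !mulrDr.
by rewrite -![in LHS]scalerAl -![in LHS]scalerAr ![in LHS]PhiD ![in LHS]PhiZ; ring.
Qed.

(* Cauchy-Schwarz for the positive form (z, w) |-> Phi(z^* w): positivity at
   r w + z and at r i w + z for all real r. *)
Lemma Phi_null_star_mul z : Phi (star z * z) = 0 -> forall w, Phi (star z * w) = 0.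
Proof.
move=> hz.
have polar_re w : Phi (star z * w) + Phi (star w * z) = 0.
  apply: (quadratic_ge0_coef1_eq0C (D := Phi (star w * w))) => r.
  have := Phi_pos hH (r%:C *: w + z).
  rewrite Phi_star_expand hz [Num.conj _]conjc_real addr0.
  suff -> : r%:C * r%:C * Phi (star w * w) + r%:C * Phi (star w * z)
      + r%:C * Phi (star z * w) =
    r%:C * (Phi (star z * w) + Phi (star w * z)) + r%:C ^+ 2 * Phi (star w * w) by [].
  by rewrite expr2; ring.
move=> w; have h1 := polar_re w; have h2 := polar_re ('i *: w).
rewrite starZ -scalerAl -scalerAr !PhiZ in h2.
have conj_i : Num.conj ('i : C) = - 'i by apply/eqP; rewrite eq_complex /= oppr0 !eqxx.
rewrite conj_i in h2.
have sym : Phi (star z * w) = Phi (star w * z).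
  have : 'i * (Phi (star z * w) - Phi (star w * z)) = 0 by rewrite -h2; ring.
  move/eqP; rewrite mulf_eq0 => /orP [/eqP hi|]; last by rewrite subr_eq0 => /eqP.
  by move: hi => /eqP; rewrite eq_complex /= oner_eq0 andbF.
by move: h1; rewrite -sym -mulr2n => /eqP; rewrite mulrn_eq0 /= => /eqP.
Qed.

Section AdjointInvariance.
Hypothesis Phi_ad : forall h x,
  sw h (fun a b => (Phi (Sinv b * x * a) : C^o)) = eps h * Phi x.

Lemma Phi_modular a b : Phi (a * b) = Phi (b * S (S a)).
Proof.
suff Phi_Sinv2 y c : Phi (Sinv (Sinv y) * c) = Phi (c * y).
  by rewrite -[RHS]Phi_Sinv2 !(SK hH).
transitivity (sw y (fun y1 y2 =>
    sw y1 (fun d e => (Phi (Sinv e * (Sinv (Sinv y2) * c) * d) : C^o)))).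
  symmetry; under sw_ext => y1 y2 do rewrite Phi_ad.
  by rewrite (sw_counitL (f := fun y2 => (Phi (Sinv (Sinv y2) * c) : C^o))) //; linsolve.
rewrite (sw_coassoc (g := fun d e f =>
  (Phi (Sinv e * (Sinv (Sinv f) * c) * d) : C^o))); last by linsolve.
transitivity (sw y (fun y1 w => eps w *: (Phi (c * y1) : C^o))).
  apply: sw_ext => y1 w /=.
  pose F u := (Phi (Sinv u * c * y1) : C^o).
  transitivity (sw w (fun y2 y3 => F (Sinv y3 * y2))).
    by rewrite /F; swext; rewrite Sinv_mul !mulrA.
  by rewrite sw_antipodeInvR /F ?Sinv1 ?mul1r //; linsolve.
by rewrite (sw_counitR (f := fun y1 => (Phi (c * y1) : C^o))) //; linsolve.
Qed.

Lemma S4_id y : S (S (S (S y))) = y.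
Proof.
apply/eqP; rewrite eq_sym -subr_eq0; apply/eqP; apply: Phi_faithful => x.
rewrite mulrBr PhiB; apply/eqP; rewrite subr_eq0; apply/eqP.
by rewrite -[LHS]Phi_S S_mul [LHS]Phi_modular -S_mul Phi_S [LHS]Phi_modular.
Qed.

(* z := S^2 y - y satisfies S^2 z = - z, so the modular identity gives
   Phi(z z^* ) = - Phi(z^* z); both are nonnegative, hence zero. *)
Lemma S2_id y : S (S y) = y.
Proof.
pose z := S (S y) - y.
have SSz : S (S z) = - z by rewrite /z !(linB linear_S) S4_id opprB.
have Phi_zzs : Phi (z * star z) = - Phi (star z * z).
  by rewrite Phi_modular SSz mulrN -(linN linear_Phi).
have := Phi_pos hH (star z); rewrite (star_invol hH) Phi_zzs oppr_ge0 => le0.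
have z_null : Phi (star z * z) = 0.
  by apply/eqP; rewrite Order.POrderTheory.eq_le le0 (Phi_pos hH).
have SSzs : S (S (star z)) = 0.
  by apply: Phi_faithful => x; rewrite -Phi_modular Phi_null_star_mul.
have zs0 : star z = 0 by rewrite -[star z]S4_id SSzs !(lin0 linear_S).
have z0 : z = 0 by rewrite -[z](star_invol hH) zs0 star0.
by apply/eqP; rewrite -subr_eq0 -/z z0.
Qed.

Lemma tracial_of_ad_invariant : tracial Phi.
Proof. by move=> a b; rewrite Phi_modular S2_id. Qed.

End AdjointInvariance.

Lemma inI0 : inI Phi 0.
Proof. by exists 0; apply/funext => x; rewrite mul0r (lin0 linear_Phi). Qed.

Lemma inI_lin a u u' : inI Phi u -> inI Phi u' -> inI Phi (a *: u + u').
Proof.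
move=> [b ->] [b' ->]; exists (a *: b + b'); apply/funext => x.
by rewrite mulrDl -scalerAl PhiD PhiZ.
Qed.

Section Kac.
Hypothesis Phi_tr : tracial Phi.

(* Separation by the functionals Phi(c -) of the two sides of
   sum Phi(y_2 c) S(y_1) = sum Phi(y_2 c) S^-1(y_1), which follows from
   strong invariance once Phi is tracial. *)
Lemma S_eq_Sinv y : S y = Sinv y.
Proof.
suff : \sum_(p <- [seq (S q.1 - Sinv q.1, q.2) | q <- Delta y]) eps p.2 *: p.1 = 0.
  rewrite big_map /=.
  have -> : \sum_(q <- Delta y) eps q.2 *: (S q.1 - Sinv q.1) =
    sw y (fun a b => eps b *: (S a - Sinv a)) by [].
  rewrite (sw_counitR (f := fun a => S a - Sinv a)); last by linsolve.
  by move/eqP; rewrite subr_eq0 => /eqP.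
apply: (separated_sum_eq0 (P := fun _ => True) (T := inI Phi)
  (B := fun u w => eps w *: u)) => //.
- exact: inI_linear.
- by move=> w a u u' _ _; rewrite scalerDr !scalerA mulrC.
- by move=> u /=; linsolve.
- move=> u w _ hw; rewrite (Phi_faithful (c := w)) ?(lin0 linear_eps) ?scale0r // => x.
  exact: (hw _ (inI_Phi_mul x)).
move=> t [c ->]; rewrite big_map /=.
have e1 := strong_invariance_S y c; have e2 := strong_invariance_Sinv_r c y.
rewrite /sweedler in e1 e2.
under eq_bigr => p _ do rewrite scalerBr.
rewrite sumrB; apply/eqP; rewrite subr_eq0; apply/eqP.
under eq_bigr => p _ do rewrite Phi_tr.
rewrite -e1; under eq_bigr => p _ do rewrite Phi_tr.
by rewrite e2; apply: eq_bigr => p _; rewrite Phi_tr.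
Qed.

Lemma S2_id_tracial y : S (S y) = y.
Proof. by rewrite [S y]S_eq_Sinv (SinvK hH). Qed.

Definition toI (k : H) : Hfun H := fun x => Phi (S k * x).

Lemma toI_inI k : inI Phi (toI k).
Proof. by exists (S k). Qed.

Lemma toI_lin a h k : toI (a *: h + k) = a *: toI h + toI k.
Proof. by apply/funext => x; rewrite /toI (S_lin hH) mulrDl -scalerAl PhiD PhiZ. Qed.

Lemma toI_inj : injective toI.
Proof.
move=> k k' e; apply: (can_inj (SK hH)); apply/eqP; rewrite -subr_eq0; apply/eqP.
apply: Phi_faithful => x; rewrite mulrBr PhiB ![Phi (x * _)]Phi_tr.
by have := congr1 (fun f => f x) e; rewrite /toI => ->; rewrite subrr.
Qed.

Lemma inI_toI w : inI Phi w -> exists k, w = toI k.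
Proof. by move=> [a ->]; exists (S a); rewrite /toI S2_id_tracial. Qed.

Lemma toI_act h k : toI (actH Delta Sinv h k) = actI Delta Sinv h (toI k).
Proof.
apply/funext => x; rewrite /actI /toI.
have -> : actH Delta Sinv h k = sw h (fun a b => b * k * Sinv a) by [].
have lx : linear (fun y : H => y * x) by linsolve.
rewrite (sw_map linear_S) (sw_map lx) (sw_map linear_Phi) /sweedler.
apply: eq_bigr => p _; rewrite !S_mul (SinvK hH) !S_eq_Sinv.
by rewrite !mulrA [RHS]Phi_tr !mulrA.
Qed.

Lemma conv_toI h c :
  conv Delta (fun x => Phi (c * x)) (toI h) = \sum_(p <- Delta h) Phi (c * p.2) *: toI p.1.
Proof.
have lSh : linear (fun y : H => S h * y) by linsolve.
apply/funext => x; rewrite fct_sumE /conv /toI.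
transitivity (sw c (fun c1 c2 => (Phi (c1 * x) * Phi (c2 * h) : C^o))).
  transitivity (Phi (S h * sw x (fun x1 x2 => Phi (c * x1) *: x2))).
    rewrite (sw_map lSh) (sw_map linear_Phi) /sweedler; apply: eq_bigr => p _.
    by rewrite -scalerAr PhiZ.
  rewrite strong_invariance_Sinv_l (sw_map lSh) (sw_map linear_Phi); swext.
  by rewrite -scalerAr PhiZ -S_eq_Sinv -S_mul Phi_S.
symmetry; have lx : linear (fun y : H => y * x) by linsolve.
transitivity (Phi (S (sw h (fun h1 h2 => Phi (c * h2) *: h1)) * x)).
  rewrite (sw_map linear_S) (sw_map lx) (sw_map linear_Phi) /sweedler.
  by apply: eq_bigr => p _; rewrite (linZ linear_S) -scalerAl PhiZ.
rewrite strong_invariance_S (sw_map linear_S) (sw_map lx) (sw_map linear_Phi); swext.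
by rewrite (linZ linear_S) -scalerAl PhiZ S2_id_tracial mulrC.
Qed.

Variable deltaI : Hfun H -> seq (Hfun H * H).
Hypothesis hdI : is_deltaI Delta Phi deltaI.

(* The coaction of I on toI h is [seq (toI p.1, p.2) | p <- Delta h]: both
   tensors have the same contractions by the functionals in I. *)
Lemma coaction_toI h U (B : Hfun H -> H -> U) :
  (forall w a u u', inI Phi u -> inI Phi u' -> B (a *: u + u') w = a *: B u w + B u' w) ->
  (forall u, linear (B u)) ->
  \sum_(p <- deltaI (toI h)) B p.1 p.2 = \sum_(p <- Delta h) B (toI p.1) p.2.
Proof.
move=> B_linl B_linr.
have BN u w : inI Phi u -> B (- u) w = - B u w.
  move=> Iu; have := B_linl w (-1) u 0 Iu inI0; rewrite !scaleN1r !addr0 => ->.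
  suff -> : B 0 w = 0 by rewrite addr0.
  have := B_linl w 1 0 0 inI0 inI0; rewrite !scale1r addr0 => e.
  by apply: (addrI (B 0 w)); rewrite -e addr0.
suff : \sum_(p <- deltaI (toI h) ++ [seq (- toI q.1, q.2) | q <- Delta h]) B p.1 p.2 = 0.
  rewrite big_cat big_map /= (eq_bigr (fun p => - B (toI p.1) p.2)); last first.
    by move=> p _; rewrite BN //; apply: toI_inI.
  by rewrite sumrN => /eqP; rewrite subr_eq0 => /eqP.
apply: (separated_sum_eq0 (P := inI Phi) (T := inI Phi) (B := B)) => //.
- exact: inI0.
- exact: inI_lin.
- exact: inI_linear.
- move=> u w _ hw; rewrite (Phi_faithful (c := w)) ?(lin0 (B_linr u)) // => x.
  exact: (hw _ (inI_Phi_mul x)).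
- move=> p /(List.in_app_or _ _ _) [|/List.in_map_iff [q [<- _]]].
    exact: (hdI (toI_inI h)).1.
  by rewrite /= -scaleN1r -[_ *: _]addr0; apply: inI_lin; [apply: toI_inI | apply: inI0].
- move=> t [c ->]; rewrite big_cat /= big_map /=.
  rewrite -((hdI (toI_inI h)).2 _ (inI_Phi_mul c)) conv_toI -big_split /=.
  by rewrite big1 // => p _; rewrite scalerN subrr.
Qed.

Definition ofI (w : Hfun H) : H :=
  match pselect (exists k, toI k = w) with
  | left e => projT1 (cid e)
  | right _ => 0
  end.

Lemma toIK k : ofI (toI k) = k.
Proof.
rewrite /ofI; case: pselect => [e|n]; last by exfalso; apply: n; exists k.
by apply: toI_inj; rewrite (projT2 (cid e)).
Qed.

Lemma ofIK w : inI Phi w -> toI (ofI w) = w.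
Proof. by move=> /inI_toI [k ->]; rewrite toIK. Qed.

Lemma YD_isomorphic_of_tracial : YD_isomorphic Delta Sinv Phi deltaI.
Proof.
exists toI, ofI; split; [split | split | exact: toIK | exact: ofIK].
- exact: toI_inI.
- exact: toI_lin.
- exact: toI_act.
- move=> h U B [B_linl B_linr]; rewrite /tsum big_map /=.
  by apply: coaction_toI => // w a u u' _ _; rewrite (B_linr w).
- by move=> a w1 w2 /inI_toI [k1 ->] /inI_toI [k2 ->]; rewrite -toI_lin !toIK.
- by move=> h w /inI_toI [k ->]; rewrite -toI_act !toIK.
- move=> w /inI_toI [k ->]; rewrite toIK => U B [B_linl B_linr].
  rewrite /tsum big_map /= (@coaction_toI k _ (fun u w => B (ofI u) w)) /=.
  + by apply: eq_bigr => p _; rewrite toIK.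
  + by move=> w0 a u u' /inI_toI [k1 ->] /inI_toI [k2 ->]; rewrite -toI_lin !toIK B_linr.
  + by move=> u; apply: B_linl.
Qed.

End Kac.

(* omega := F 1 is coinvariant, as 1 is, hence a nonzero multiple of Phi; it
   is fixed up to eps by the action of H, as 1 is. *)
Lemma ad_invariant_of_YD_mor deltaI F :
  is_deltaI Delta Phi deltaI -> YD_mor_HI Delta Sinv Phi deltaI F -> injective F ->
  forall h x, sw h (fun a b => (Phi (Sinv b * x * a) : C^o)) = eps h * Phi x.
Proof.
move=> hdI [FI Flin Fmod Fco] F_inj.
have lF : linear F by move=> a h k; rewrite Flin.
pose om := F 1.
have om_lin : linear om := inI_linear (FI 1).
have om_Phi x : om x = Phi x * om 1.
  have coinv : \sum_(p <- deltaI om) Phi p.2 *: p.1 = om.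
    have bB : bilinear_map (fun (u : Hfun H) (w : H) => Phi w *: u) by linsolve.
    have := Fco 1 _ _ bB; rewrite /tsum big_map /= -/om => ->.
    have -> : \sum_(p <- Delta 1) Phi p.2 *: F p.1 = sw 1 (fun a b => Phi b *: F a) by [].
    by rewrite sw_one ?(Phi_one hH) ?scale1r //; linsolve.
  have inIPhi : inI Phi (Phi : Hfun H) by exists 1; apply/funext => y; rewrite mul1r.
  have := congr1 (fun f => f x) (etrans ((hdI _ (FI 1)).2 _ inIPhi) coinv).
  rewrite /conv /= => <-.
  transitivity (om (sw x (fun a b => Phi a *: b))); last first.
    by rewrite (sw_PhiinvL (f := id)) // (linZ om_lin).
  by rewrite (sw_map om_lin) /sweedler; apply: eq_bigr => p _; rewrite (linZ om_lin).
have om1 : om 1 != 0.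
  apply/eqP => om10; have := Phi_one hH; apply/eqP; rewrite eq_sym.
  suff -> : (1 : H) = 0 by rewrite (lin0 linear_Phi) oner_neq0.
  apply: F_inj; rewrite (lin0 lF) -/om.
  by apply/funext => y; rewrite om_Phi om10 mulr0.
move=> h x; apply: (mulIf om1); rewrite -mulrA -om_Phi.
have h1 : actH Delta Sinv h 1 = eps h *: 1.
  rewrite -(sw_antipodeInvL (f := id)) //.
  by apply: eq_bigr => p _; rewrite mulr1.
have := congr1 (fun f => f x) (Fmod h 1); rewrite h1 (linZ lF) -/om => e.
have -> : eps h * om x = \sum_(p <- Delta h) om (Sinv p.2 * x * p.1) := e.
by rewrite /sweedler mulr_suml; apply: eq_bigr => p _; rewrite [RHS]om_Phi.
Qed.

Lemma tracial_of_YD_isomorphic deltaI :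
  is_deltaI Delta Phi deltaI -> YD_isomorphic Delta Sinv Phi deltaI -> tracial Phi.
Proof.
move=> hdI [F [G [hF _ GF _]]]; apply: tracial_of_ad_invariant.
exact: (ad_invariant_of_YD_mor hdI hF (can_inj GF)).
Qed.

End CQGTheory.

Theorem mainTheorem8 (R : realType) (H : algType R[i])
  (Delta : H -> seq (H * H)) (eps : H -> R[i]) (S Sinv star : H -> H)
  (Phi : H -> R[i])
  (hH : is_CQG_Hopf_star Delta eps S Sinv star Phi)
  (deltaI : Hfun H -> seq (Hfun H * H))
  (hdI : is_deltaI Delta Phi deltaI) :
  YD_isomorphic Delta Sinv Phi deltaI <-> tracial Phi.
Proof.
split; first exact: (tracial_of_YD_isomorphic hH hdI).
by move=> Phi_tr; apply: (YD_isomorphic_of_tracial hH Phi_tr hdI).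
Qed.
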